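(* With $\chi=1$ the trivial character, the restriction maps $j_1:\mathcal S^*(\overline{\mathcal O}_1)^{\chi}\to\mathcal S^*(\mathcal O_1)^{\chi}$ and $j_1':\mathcal S^*(\overline{\mathcal O}_1)^{\chi,\infty}\to\mathcal S^*(\mathcal O_1)^{\chi,\infty}$ are isomorphisms.
   Context: $F$ nonarchimedean local field of characteristic $0$, $G=G'=\mathrm{GL}_2(F)$ acting on $M_2:=M_{2\times2}(F)$ by $(g_1,g_2)\cdot M=g_1Mg_2^{-1}$. Let $\mathcal O_i\subset M_2$ be the set of matrices of rank $i$; $\overline{\mathcal O}_1=\mathcal O_1\cup\{0\}$. For a $G\times G'$-stable locally closed $X\subset M_2$, $\mathcal S(X)$ is the space of locally constant compactly supported functions on $X$ with $((g_1,g_2)f)(M)=f(g_1^{-1}Mg_2)$, and $\mathcal S^*(X)$ is its algebraic dual with the contragredient action. For a character $\chi$ of $G$, $\mathcal S^*(X)^\chi$ is the space of $G$-invariant vectors in $\mathcal S^*(X)\otimes(|\det|\boxtimes|\det|^{-1})\otimes\chi^{-1}$ (here $G$ is the first factor). A vector $v$ in a representation $V$ of $G$ is generalized $\chi$-invariant if there is $k\ge0$ with $(g_0-\chi(g_0))(g_1-\chi(g_1))\cdots(g_k-\chi(g_k))v=0$ for all $g_0,\dots,g_k\in G$; $\mathcal S^*(X)^{\chi,\infty}$ is the space of generalized $(G,\chi)$-invariant vectors in $\mathcal S^*(X)\otimes(|\det|\boxtimes|\det|^{-1})$. The maps $j_1,j_1'$ are induced by restriction of distributions from the closed set $\overline{\mathcal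 O}_1$ to its open subset $\mathcal O_1$. *)

From HB Require Import structures.
From mathcomp Require Import all_boot all_order all_algebra.
From mathcomp Require Import complex.
From mathcomp Require Import Rstruct.
Set Implicit Arguments. Unset Strict Implicit. Unset Printing Implicit Defensive.
Import Order.TTheory GRing.Theory Num.Theory.
Local Open Scope ring_scope.

Notation RR := Rdefinitions.R.
Notation CC := (complex RR).

(* [is_nalf F nabs] : F is a nonarchimedean local field of characteristic 0
   and [nabs] is its normalized absolute value: a discrete, nontrivial,
   ultrametric absolute value for which F is complete, with finite residue
   field of cardinality q, normalized so that |uniformizer| = q^-1. *)
Definition cauchy_seq (F : fieldType) (nabs : F -> RR) (u : nat -> F) :=
  forall e : RR, 0 < e -> exists N : nat, forall m n, (N <= m)%N -> (N <= n)%N ->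
    nabs (u m - u n) < e.
Definition converges_to (F : fieldType) (nabs : F -> RR) (u : nat -> F) l :=
  forall e : RR, 0 < e -> exists N : nat, forall n, (N <= n)%N -> nabs (u n - l) < e.

Definition is_nalf (F : fieldType) (nabs : F -> RR) : Prop :=
  [/\ [pchar F] =i pred0,
      (nabs 0 = 0 /\ forall x, x != 0 -> 0 < nabs x),
      ((forall x y, nabs (x * y) = nabs x * nabs y) /\
       (forall x y, nabs (x + y) <= Num.max (nabs x) (nabs y))),
      (forall u, cauchy_seq nabs u -> exists l, converges_to nabs u l) &
      exists (pi : F) (q : nat), [/\ (1 < q)%N,
        nabs pi = (q%:R)^-1,
        (forall x, x != 0 -> exists n : int, nabs x = nabs pi ^ n) &
        (* residue field {|x| <= 1} / {|x| < 1} has exactly q elements *)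
        exists s : seq F, [/\ size s = q,
          all (fun r => nabs r <= 1) s,
          (forall i j, (i < q)%N -> (j < q)%N -> i != j ->
              nabs (nth 0 s i - nth 0 s j) = 1) &
          (forall x, nabs x <= 1 -> exists2 r, r \in s & nabs (x - r) < 1)]]].

Section Dist.
Variables (F : fieldType) (nabs : F -> RR).

Definition M2 := 'M[F]_2.

(* max-norm on M_2(F); it induces the usual topology *)
Definition mnorm (M : M2) : RR :=
  \big[Num.max/0]_(i < 2) \big[Num.max/0]_(j < 2) nabs (M i j).

Definition O1 : M2 -> Prop := fun M => \rank M = 1%N.
Definition O1bar : M2 -> Prop := fun M => (\rank M <= 1)%N.

(* sequential compactness (= compactness in the metric space M_2(F)) *)
Definition seq_compact (K : M2 -> Prop) : Prop :=
  forall u : nat -> M2, (forall n, K (u n)) ->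
    exists (phi : nat -> nat) (L : M2),
      [/\ (forall n, (phi n < phi n.+1)%N), K L &
          forall e : RR, 0 < e -> exists N : nat, forall n, (N <= n)%N ->
            mnorm (u (phi n) - L) < e].

(* S(X): locally constant compactly supported C-valued functions on X,
   represented as functions on M_2(F) vanishing outside X *)
Definition is_S (X : M2 -> Prop) (f : M2 -> CC) : Prop :=
  [/\ (forall M, ~ X M -> f M = 0),
      (forall M, X M -> exists2 e : RR, 0 < e &
          forall N, X N -> mnorm (N - M) < e -> f N = f M) &
      exists K : M2 -> Prop, [/\ seq_compact K, (forall M, K M -> X M) &
          forall M, X M -> f M != 0 -> K M]].

(* elements of the algebraic dual S^*(X): maps on functions, linear on S(X);
   two of them are the same element of S^*(X) iff they agree on S(X) *)
Definition is_dual (X : M2 -> Prop) (xi : (M2 -> CC) -> CC) : Prop :=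
  forall (a : CC) f g, is_S X f -> is_S X g ->
    xi (fun M => a * f M + g M) = a * xi f + xi g.

Definition dual_eq (X : M2 -> Prop) (xi eta : (M2 -> CC) -> CC) : Prop :=
  forall f, is_S X f -> xi f = eta f.

(* action of g in G (first factor) on S^*(X) (x) (|det| [x] |det|^-1):
   (g.f)(M) = f(g^-1 M), contragredient (g.xi)(f) = xi(g^-1.f),
   twisted by |det g|. *)
Definition act (g : M2) (xi : (M2 -> CC) -> CC) : (M2 -> CC) -> CC :=
  fun f => (real_complex RR (nabs (\det g))) * xi (fun M => f (g *m M)).

Definition act_m1 (g : M2) (xi : (M2 -> CC) -> CC) : (M2 -> CC) -> CC :=
  fun f => act g xi f - xi f.

(* S^*(X)^chi for chi = 1: G-invariant vectors *)
Definition inv_triv (X : M2 -> Prop) (xi : (M2 -> CC) -> CC) : Prop :=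
  is_dual X xi /\ forall g : M2, g \in unitmx -> dual_eq X (act g xi) xi.

(* S^*(X)^{chi,infty} for chi = 1: generalized invariant vectors *)
Definition gen_inv_triv (X : M2 -> Prop) (xi : (M2 -> CC) -> CC) : Prop :=
  is_dual X xi /\ exists k : nat, forall gs : seq M2,
    size gs = k.+1 -> all (fun g => g \in unitmx) gs ->
    dual_eq X (foldr act_m1 xi gs) (fun _ => 0).

End Dist.

(* the restriction map S^*((@O1bar F)) -> S^*(O1) (extension by zero
   S(O1) -> S((@O1bar F)) dualized) restricted to a subspace P, is bijective
   onto the corresponding subspace (it is obviously linear). *)
Definition restr_bij (F : fieldType) (nabs : F -> RR) (P : (M2 F -> Prop) -> ((M2 F -> CC) -> CC) -> Prop) : Prop :=
  (forall xi eta, P (@O1bar F) xi -> P (@O1bar F) eta ->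
      dual_eq nabs (@O1 F) xi eta -> dual_eq nabs (@O1bar F) xi eta) /\
  (forall xi, P (@O1bar F) xi -> P (@O1 F) xi) /\
  (forall eta, P (@O1 F) eta -> exists2 xi, P (@O1bar F) xi & dual_eq nabs (@O1 F) xi eta).

From Pilot Require Import Defs.
From HB Require Import structures.
From mathcomp Require Import all_boot all_order all_algebra.
From mathcomp Require Import complex Rstruct ring.
From Stdlib Require Import Classical FunctionalExtensionality IndefiniteDescription.
Set Implicit Arguments. Unset Strict Implicit. Unset Printing Implicit Defensive.
Import Order.TTheory GRing.Theory Num.Theory.
Local Open Scope ring_scope.

(* A compactly supported locally constant function on O1 extends by
   zero to O1bar, because a compact subset of O1 stays away from 0; hence S(O1) is
   the kernel of evaluation at 0 on S(O1bar), and a functional on S(O1bar) that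
   vanishes on S(O1) is a multiple of the point mass at 0.  Since g.0 = 0, the
   group acts on that point mass by the twist |det g|, so the central element
   z = pi.1 acts by |pi|^2 = q^-2 <> 1 and (z - 1)^n is invertible on it.  This
   rules out nonzero (generalized) invariants supported at 0, which gives
   injectivity; for surjectivity, an arbitrary extension of a (generalized)
   invariant functional becomes invariant after subtracting the suitable
   multiple of its image under (z - 1)^N. *)

Lemma leq_incr (f : nat -> nat) : (forall n, f n < f n.+1)%N -> forall n, (n <= f n)%N.
Proof. by move=> f_incr; elim=> // n IHn; apply: leq_ltn_trans IHn (f_incr n). Qed.

Lemma incr_subseq_infinitely_often (P : nat -> Prop) :
  (forall N, exists n, (N <= n)%N /\ P n) ->
  exists psi : nat -> nat, (forall n, psi n < psi n.+1)%N /\ forall n, P (psi n).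
Proof.
move=> /functional_choice [next next_spec].
pose psi := fix psi n := if n is m.+1 then next (psi m).+1 else next 0%N.
exists psi; split=> [n|[|n]] /=;
  [exact: (proj1 (next_spec _)) | exact: (proj2 (next_spec _))..].
Qed.

Section LocalField.
Variables (F : fieldType) (nabs : F -> RR).
Hypotheses (nabs0 : nabs 0 = 0) (nabs_gt0 : forall x, x != 0 -> 0 < nabs x)
  (nabsM : forall x y, nabs (x * y) = nabs x * nabs y)
  (nabs_ultra : forall x y, nabs (x + y) <= Num.max (nabs x) (nabs y)).

Local Notation O1 := (@O1 F).
Local Notation O1bar := (@O1bar F).

Lemma nabs_ge0 x : 0 <= nabs x.
Proof. by have [->|/nabs_gt0/ltW] := eqVneq x 0; rewrite ?nabs0. Qed.

Lemma nabs1 : nabs 1 = 1.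
Proof.
apply: (mulfI (lt0r_neq0 (nabs_gt0 (oner_neq0 F)))).
by rewrite -nabsM !mulr1.
Qed.

Lemma nabsN x : nabs (- x) = nabs x.
Proof.
have : nabs (-1) ^+ 2 == 1 by rewrite expr2 -nabsM mulrNN mulr1 nabs1.
by rewrite sqrp_eq1 ?nabs_ge0 // => /eqP N1; rewrite -mulN1r nabsM N1 mul1r.
Qed.

Lemma le_mnorm (M : M2 F) i j : nabs (M i j) <= mnorm nabs M.
Proof. exact: le_trans (le_bigmax _ _ j) (le_bigmax _ _ i). Qed.

Lemma mnorm_le (M : M2 F) r :
  0 <= r -> (forall i j, nabs (M i j) <= r) -> mnorm nabs M <= r.
Proof. by move=> r_ge0 Mr; do 2!apply: bigmax_le => // ? _. Qed.

Lemma mnorm_ge0 (M : M2 F) : 0 <= mnorm nabs M.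
Proof. exact: le_trans (nabs_ge0 (M 0 0)) (le_mnorm _ _ _). Qed.

Lemma mnorm_gt0 (M : M2 F) : M != 0 -> 0 < mnorm nabs M.
Proof.
move=> M_neq0; have [i [j Mij_neq0]] : exists i j, M i j != 0.
  apply: NNPP => none; move/eqP: M_neq0; apply; apply/matrixP => i j.
  by rewrite mxE; apply: NNPP => Mij; apply: none; exists i, j; apply/eqP.
exact: lt_le_trans (nabs_gt0 Mij_neq0) (le_mnorm _ _ _).
Qed.

Lemma mnormN (M : M2 F) : mnorm nabs (- M) = mnorm nabs M.
Proof.
have le_mnormN (A : M2 F) : mnorm nabs (- A) <= mnorm nabs A.
  by apply: mnorm_le => [|i j]; rewrite ?mnorm_ge0 // mxE nabsN le_mnorm.
by apply/le_anti; rewrite le_mnormN -{1}(opprK M) le_mnormN.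
Qed.

Lemma mnormD (A B : M2 F) :
  mnorm nabs (A + B) <= Num.max (mnorm nabs A) (mnorm nabs B).
Proof.
apply: mnorm_le => [|i j]; first by rewrite le_max mnorm_ge0.
rewrite mxE; apply: le_trans (nabs_ultra _ _) _.
by rewrite ge_max !le_max !le_mnorm orbT.
Qed.

Lemma mnormM (A B : M2 F) :
  mnorm nabs (A *m B) <= mnorm nabs A * mnorm nabs B.
Proof.
apply: mnorm_le => [|i j]; first by rewrite mulr_ge0 ?mnorm_ge0.
rewrite mxE !big_ord_recr big_ord0 /= add0r; apply: le_trans (nabs_ultra _ _) _.
by rewrite ge_max !nabsM; apply/andP; split; apply: ler_pM; rewrite ?nabs_ge0 ?le_mnorm.
Qed.

Lemma mnorm_ge_of_near (A B : M2 F) :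
  mnorm nabs (A - B) < mnorm nabs B -> mnorm nabs B <= mnorm nabs A.
Proof.
move=> near; have := mnormD (B - A) A; rewrite subrK -opprB mnormN.
rewrite le_max => /orP[|] //; by rewrite leNgt near.
Qed.

Lemma mulmx_small (A : M2 F) (e : RR) : 0 < e ->
  exists2 d : RR, 0 < d & forall B, mnorm nabs B < d -> mnorm nabs (A *m B) < e.
Proof.
move=> e_gt0; have c_gt0 : 0 < mnorm nabs A + 1 by rewrite ltr_wpDl ?mnorm_ge0.
exists (e / (mnorm nabs A + 1)) => [|B]; first by rewrite divr_gt0.
rewrite ltr_pdivlMr // => small_B; apply: le_lt_trans (mnormM A B) _.
apply: le_lt_trans small_B; rewrite mulrC ler_wpM2l ?mnorm_ge0 //.
by rewrite lerDl.
Qed.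

Definition unit_stable (X : M2 F -> Prop) :=
  forall g M, g \in unitmx -> X (g *m M) <-> X M.

Lemma mxrank_unitmxM (g M : M2 F) : g \in unitmx -> \rank (g *m M) = \rank M.
Proof. by move=> g_unit; rewrite (eqmxMfull M (_ : row_full g)) ?row_full_unit. Qed.

Lemma unit_stable_O1 : unit_stable O1.
Proof. by move=> g M /mxrank_unitmxM; rewrite /Defs.O1 => ->. Qed.

Lemma unit_stable_O1bar : unit_stable O1bar.
Proof. by move=> g M /mxrank_unitmxM; rewrite /Defs.O1bar => ->. Qed.

Lemma O1bar_cases (M : M2 F) : O1bar M -> O1 M \/ M = 0.
Proof.
rewrite /Defs.O1bar /Defs.O1 leq_eqVlt ltnS leqn0 mxrank_eq0.
by case/orP=> /eqP; [left | right].
Qed.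

Lemma O1_O1bar (M : M2 F) : O1 M -> O1bar M.
Proof. by rewrite /Defs.O1 /Defs.O1bar => ->. Qed.

Lemma O1_neq0 (M : M2 F) : O1 M -> M != 0.
Proof. by rewrite /Defs.O1; apply: contra_eqN => /eqP->; rewrite mxrank0. Qed.

Lemma seq_compactU (K1 K2 : M2 F -> Prop) :
  seq_compact nabs K1 -> seq_compact nabs K2 ->
  seq_compact nabs (fun M => K1 M \/ K2 M).
Proof.
move=> K1_cpt K2_cpt u u_in.
have [K1_often|K1_rare] := classic (forall N, exists n, (N <= n)%N /\ K1 (u n)).
  have [psi [psi_incr K1_psi]] := incr_subseq_infinitely_often K1_often.
  have [phi [L [phi_incr K1L uL]]] := K1_cpt _ K1_psi.
  exists (psi \o phi), L; split; [|by left|by []].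
  by move=> n; apply: (homo_ltn ltn_trans psi_incr).
have [N K2_after] : exists N, forall n, (N <= n)%N -> K2 (u n).
  apply: NNPP => K2_not_after; apply: K1_rare => N; apply: NNPP => K1_none.
  apply: K2_not_after; exists N => n le_Nn; case: (u_in n) => // K1n.
  by case: K1_none; exists n.
have [phi [L [phi_incr K2L uL]]] :=
  K2_cpt (fun n => u (n + N)%N) (fun n => K2_after _ (leq_addl n N)).
exists (fun n => phi n + N)%N, L; split; [|by right|by []].
by move=> n; rewrite ltn_add2r.
Qed.

Lemma is_S0 (X : M2 F -> Prop) : is_S nabs X (fun=> 0).
Proof.
split=> [//|M _|]; first by exists 1.
by exists (fun=> False); split=> [u /(_ 0%N)|M|M _ /eqP].
Qed.

Lemma is_S_lin (X : M2 F -> Prop) (a : CC) (f g : M2 F -> CC) :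
  is_S nabs X f -> is_S nabs X g -> is_S nabs X (fun M => a * f M + g M).
Proof.
move=> [f_out f_lc [K1 [K1_cpt K1X f_supp]]] [g_out g_lc [K2 [K2_cpt K2X g_supp]]].
split=> [M XM|M XM|].
- by rewrite f_out // g_out // mulr0 addr0.
- have [e1 e1_gt0 f_e1] := f_lc _ XM; have [e2 e2_gt0 g_e2] := g_lc _ XM.
  exists (Num.min e1 e2) => [|N XN]; first by rewrite lt_min e1_gt0.
  by rewrite lt_min => /andP[N_e1 N_e2]; rewrite f_e1 // g_e2.
- exists (fun M => K1 M \/ K2 M); split; first exact: seq_compactU.
    by move=> M [/K1X|/K2X].
  move=> M XM; have [fM0|/(f_supp _ XM)] := eqVneq (f M) 0; last by left.
  have [gM0|/(g_supp _ XM)] := eqVneq (g M) 0; last by right.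
  by rewrite fM0 gM0 mulr0 addr0 eqxx.
Qed.

Lemma is_S_scale (X : M2 F -> Prop) (a : CC) (f : M2 F -> CC) :
  is_S nabs X f -> is_S nabs X (fun M => a * f M).
Proof.
move=> Sf; have := is_S_lin a Sf (is_S0 X).
by congr is_S; apply: functional_extensionality => M; rewrite addr0.
Qed.

Lemma is_S_sub (X : M2 F -> Prop) (a : CC) (f g : M2 F -> CC) :
  is_S nabs X f -> is_S nabs X g -> is_S nabs X (fun M => f M - a * g M).
Proof.
move=> Sf Sg; have := is_S_lin (- a) Sg Sf.
by congr is_S; apply: functional_extensionality => M; rewrite addrC mulNr.
Qed.

Lemma is_S_translate (X : M2 F -> Prop) (g : M2 F) (f : M2 F -> CC) :
  unit_stable X -> g \in unitmx -> is_S nabs X f ->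
  is_S nabs X (fun M => f (g *m M)).
Proof.
move=> X_stable g_unit [f_out f_lc [K [K_cpt KX f_supp]]].
have Xg M : X (g *m M) <-> X M by apply: X_stable.
split=> [M /Xg|M /Xg XgM|]; first exact: f_out.
  have [e e_gt0 f_e] := f_lc _ XgM; have [d d_gt0 g_d] := mulmx_small g e_gt0.
  by exists d => // N /Xg XgN small; apply: f_e; rewrite // -mulmxBr g_d.
exists (fun M => K (g *m M)); split=> [u Ku|M /KX /Xg //|M /Xg XgM /f_supp]; last exact.
have [phi [L [phi_incr KL uL]]] := K_cpt _ Ku.
exists phi, (invmx g *m L); split; rewrite ?mulmxA ?mulmxV ?mul1mx // => e e_gt0.
have [d d_gt0 ginv_d] := mulmx_small (invmx g) e_gt0.
have [N uN] := uL d d_gt0; exists N => n le_Nn.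
rewrite -[u _](mul1mx) -(mulVmx g_unit) -mulmxA -mulmxBr.
exact/ginv_d/uN.
Qed.

Lemma seq_compact_O1_away0 (K : M2 F -> Prop) :
  seq_compact nabs K -> (forall M, K M -> O1 M) ->
  exists2 e : RR, 0 < e & forall M, K M -> e <= mnorm nabs M.
Proof.
move=> K_cpt KO1; apply: NNPP => not_away.
have small n : exists M, K M /\ mnorm nabs M < (n.+1%:R)^-1.
  apply: NNPP => none; apply: not_away; exists (n.+1%:R)^-1 => [|M KM].
    by rewrite invr_gt0 ltr0Sn.
  by rewrite leNgt; apply/negP => lt_M; apply: none; exists M.
have [u u_spec] : exists u : nat -> M2 F,
    forall n, K (u n) /\ mnorm nabs (u n) < (n.+1%:R)^-1.
  exact: functional_choice small.
have [phi [L [phi_incr KL uL]]] := K_cpt u (fun n => proj1 (u_spec n)).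
have L_gt0 := mnorm_gt0 (O1_neq0 (KO1 _ KL)).
have [N0 uN0] := uL _ L_gt0.
pose n := maxn N0 (Num.Def.archi_bound (mnorm nabs L)^-1).
have := mnorm_ge_of_near (uN0 n (leq_maxl _ _)); apply/negP; rewrite -ltNge.
apply: lt_le_trans (proj2 (u_spec _)) _; rewrite -[leRHS]invrK.
rewrite lef_pV2 ?posrE ?invr_gt0 ?ltr0Sn //.
have invL_ge0 : 0 <= (mnorm nabs L)^-1 by rewrite invr_ge0 ltW.
apply: le_trans (ltW (archi_boundP invL_ge0)) _.
by rewrite ler_nat ltnW // ltnS (leq_trans (leq_maxr _ _) (leq_incr phi_incr n)).
Qed.

Lemma is_S_O1_O1bar (f : M2 F -> CC) : is_S nabs O1 f -> is_S nabs O1bar f.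
Proof.
move=> [f_out f_lc [K [K_cpt KO1 f_supp]]].
have f0 : f 0 = 0 by apply: f_out => /O1_neq0; rewrite eqxx.
have [e e_gt0 K_away] := seq_compact_O1_away0 K_cpt KO1.
have f_O1 M : f M != 0 -> O1 M.
  by move=> fM_neq0; apply: NNPP => /f_out fM0; rewrite fM0 eqxx in fM_neq0.
have f_near0 N : mnorm nabs N < e -> f N = 0.
  move=> small; apply/eqP; apply: contraTT small => fN_neq0; rewrite -leNgt.
  exact/K_away/(f_supp _ (f_O1 _ fN_neq0)).
split=> [M O1bar_M|M /O1bar_cases [O1M|->]|].
- by apply: f_out => /O1_O1bar.
- have [d d_gt0 f_d] := f_lc _ O1M.
  exists (Num.min d (mnorm nabs M)) => [|N /O1bar_cases [O1N|->]].
    by rewrite lt_min d_gt0 mnorm_gt0 ?O1_neq0.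
    by rewrite lt_min => /andP[/(f_d _ O1N)].
  by rewrite sub0r mnormN lt_min ltxx andbF.
- by exists e => // N _; rewrite subr0 f0; apply: f_near0.
- exists K; split=> // [M /KO1 /O1_O1bar //|M _ fM_neq0].
  exact: f_supp (f_O1 _ fM_neq0) fM_neq0.
Qed.

Lemma is_S_O1bar_O1 (f : M2 F -> CC) :
  is_S nabs O1bar f -> f 0 = 0 -> is_S nabs O1 f.
Proof.
move=> [f_out f_lc [K [K_cpt KO1bar f_supp]]] f0; split=> [M O1_M|M /O1_O1bar|].
- have [O1bar_M|/f_out //] := classic (O1bar M).
  by case: (O1bar_cases O1bar_M) => // ->.
- by move=> /f_lc [e e_gt0 f_e]; exists e => // N /O1_O1bar; apply: f_e.
exists (fun M => K M /\ f M != 0); split.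
- move=> u /all_and2 [Ku fu_neq0].
  have [phi [L [phi_incr KL uL]]] := K_cpt u Ku.
  exists phi, L; split=> //; split=> //.
  have [e e_gt0 f_e] := f_lc L (KO1bar _ KL); have [N uN] := uL e e_gt0.
  rewrite -(f_e (u (phi N))) ?fu_neq0 //; first exact: KO1bar.
  exact: uN.
- move=> M [/KO1bar /O1bar_cases [] // -> ]; by rewrite f0 eqxx.
- by move=> M /O1_O1bar O1bar_M fM_neq0; split=> //; apply: f_supp.
Qed.

(* [h0] is 0 when every function in S(O1bar) vanishes at 0: the compactness of
   small balls, which would exclude this case, is never used. *)
Lemma exists_O1bar_splitting : exists2 h0 : M2 F -> CC, is_S nabs O1bar h0 &
  forall u, is_S nabs O1bar u -> is_S nabs O1 (fun M => u M - u 0 * h0 M).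
Proof.
have [[u [Su u0_neq0]]|none] := classic (exists u, is_S nabs O1bar u /\ u 0 != 0).
  exists (fun M => (u 0)^-1 * u M) => [|v Sv]; first exact: is_S_scale.
  apply: is_S_O1bar_O1; first by apply: is_S_sub => //; apply: is_S_scale.
  by rewrite mulVf // mulr1 subrr.
exists (fun=> 0) => [|v Sv]; first exact: is_S0.
apply: is_S_O1bar_O1; first exact: is_S_sub Sv (is_S0 _).
rewrite mulr0 subr0; apply: NNPP => v0_neq0.
by apply: none; exists v; split=> //; apply/eqP.
Qed.

Lemma is_dual_O1 (x : (M2 F -> CC) -> CC) :
  is_dual nabs O1bar x -> is_dual nabs O1 x.
Proof. by move=> x_lin a f g /is_S_O1_O1bar Sf /is_S_O1_O1bar Sg; apply: x_lin. Qed.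

Lemma dual_eq_O1 (x y : (M2 F -> CC) -> CC) :
  dual_eq nabs O1bar x y -> dual_eq nabs O1 x y.
Proof. by move=> xy f /is_S_O1_O1bar; apply: xy. Qed.

Definition twist (g : M2 F) : CC := real_complex RR (nabs (\det g)).

Lemma twist_scalar_mx (a : F) : twist a%:M = real_complex RR (nabs a ^+ 2).
Proof. by rewrite /twist det_scalar !expr2 nabsM. Qed.

Lemma act_m1E (g : M2 F) x f :
  act_m1 nabs g x f = twist g * x (fun M => f (g *m M)) - x f.
Proof. by []. Qed.

Lemma act_m1_sub (g : M2 F) x y (c : CC) :
  act_m1 nabs g (fun f => x f - c * y f) =
  (fun f => act_m1 nabs g x f - c * act_m1 nabs g y f).
Proof. by apply: functional_extensionality => f; rewrite !act_m1E; ring. Qed.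

Lemma foldr_act_m1_sub (gs : seq (M2 F)) x y (c : CC) :
  foldr (act_m1 nabs) (fun f => x f - c * y f) gs =
  (fun f => foldr (act_m1 nabs) x gs f - c * foldr (act_m1 nabs) y gs f).
Proof. by elim: gs => //= g gs ->; rewrite act_m1_sub. Qed.

Lemma foldr_act_m1_nseq (z : M2 F) n x :
  foldr (act_m1 nabs) x (nseq n z) = iter n (act_m1 nabs z) x.
Proof. by elim: n => //= n ->. Qed.

Lemma iter_act_m1_delta (z : M2 F) n (m : CC) :
  iter n (act_m1 nabs z) (fun u => u 0 * m) =
  (fun u => u 0 * ((twist z - 1) ^+ n * m)).
Proof.
elim: n => [|n IHn] /=; apply: functional_extensionality => u; first by rewrite mul1r.
by rewrite IHn act_m1E mulmx0 exprS; ring.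
Qed.

Section Central.
Variable z : M2 F.
Hypothesis z_central : forall A : M2 F, A *m z = z *m A.

Lemma act_m1_central (g : M2 F) x :
  act_m1 nabs z (act_m1 nabs g x) = act_m1 nabs g (act_m1 nabs z x).
Proof.
apply: functional_extensionality => f; rewrite !act_m1E.
have -> : (fun M => f (z *m (g *m M))) = (fun M => f (g *m (z *m M))).
  by apply: functional_extensionality => M; rewrite !mulmxA z_central.
ring.
Qed.

Lemma foldr_iter_act_m1 (gs : seq (M2 F)) n x :
  foldr (act_m1 nabs) (iter n (act_m1 nabs z) x) gs =
  iter n (act_m1 nabs z) (foldr (act_m1 nabs) x gs).
Proof.
elim: gs => //= g gs ->; elim: n => //= n IHn.
by rewrite -IHn act_m1_central.
Qed.

End Central.

Section StableSupport.
Variable X : M2 F -> Prop.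
Hypothesis X_stable : unit_stable X.

Lemma act_m1_resp (g : M2 F) x y : g \in unitmx ->
  dual_eq nabs X x y -> dual_eq nabs X (act_m1 nabs g x) (act_m1 nabs g y).
Proof.
move=> g_unit xy f Sf.
by rewrite !act_m1E (xy _ (is_S_translate X_stable g_unit Sf)) xy.
Qed.

Lemma act_m1_dual (g : M2 F) x : g \in unitmx ->
  is_dual nabs X x -> is_dual nabs X (act_m1 nabs g x).
Proof.
move=> g_unit x_lin a f1 f2 Sf1 Sf2; rewrite !act_m1E /=.
rewrite (x_lin a (fun M => f1 (g *m M)) (fun M => f2 (g *m M))) ?x_lin //;
  try exact: is_S_translate.
ring.
Qed.

Lemma foldr_act_m1_resp (gs : seq (M2 F)) x y :
  all (fun g => g \in unitmx) gs -> dual_eq nabs X x y ->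
  dual_eq nabs X (foldr (act_m1 nabs) x gs) (foldr (act_m1 nabs) y gs).
Proof.
move=> + xy; elim: gs => //= g gs IHgs /andP[g_unit gs_unit].
exact/act_m1_resp/IHgs.
Qed.

Lemma foldr_act_m1_dual (gs : seq (M2 F)) x :
  all (fun g => g \in unitmx) gs -> is_dual nabs X x ->
  is_dual nabs X (foldr (act_m1 nabs) x gs).
Proof.
move=> + x_lin; elim: gs => //= g gs IHgs /andP[g_unit gs_unit].
exact/act_m1_dual/IHgs.
Qed.

Lemma iter_act_m1_resp (z : M2 F) n x y : z \in unitmx -> dual_eq nabs X x y ->
  dual_eq nabs X (iter n (act_m1 nabs z) x) (iter n (act_m1 nabs z) y).
Proof.
move=> z_unit; rewrite -!foldr_act_m1_nseq.
by apply: foldr_act_m1_resp; rewrite all_nseq z_unit orbT.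
Qed.

Lemma iter_act_m1_dual (z : M2 F) n x : z \in unitmx ->
  is_dual nabs X x -> is_dual nabs X (iter n (act_m1 nabs z) x).
Proof.
move=> z_unit; rewrite -foldr_act_m1_nseq.
by apply: foldr_act_m1_dual; rewrite all_nseq z_unit orbT.
Qed.

Lemma iter_act_m1_eq0_addn (z : M2 F) m n x : z \in unitmx ->
  dual_eq nabs X (iter n (act_m1 nabs z) x) (fun=> 0) ->
  dual_eq nabs X (iter (m + n) (act_m1 nabs z) x) (fun=> 0).
Proof.
move=> z_unit /(iter_act_m1_resp m z_unit); rewrite iterD.
suff -> : iter m (act_m1 nabs z) (fun=> 0) = (fun=> 0) by [].
elim: m => //= m ->; apply: functional_extensionality => f.
by rewrite act_m1E mulr0 subrr.
Qed.

End StableSupport.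

Lemma is_dual_sub (X : M2 F -> Prop) x y (c : CC) :
  is_dual nabs X x -> is_dual nabs X y -> is_dual nabs X (fun f => x f - c * y f).
Proof. by move=> x_lin y_lin a f g Sf Sg; rewrite x_lin // y_lin //; ring. Qed.

(* [x] is killed by every product [(g_1 - 1) ... (g_N - 1)], i.e. by the N-th power
   of the augmentation ideal of the group algebra (for the |det|-twisted action). *)
Definition annihilated (X : M2 F -> Prop) (N : nat) (x : (M2 F -> CC) -> CC) :=
  forall gs, size gs = N -> all (fun g => g \in unitmx) gs ->
    dual_eq nabs X (foldr (act_m1 nabs) x gs) (fun=> 0).

Lemma annihilated_iter (X : M2 F -> Prop) N (z : M2 F) x : z \in unitmx ->
  annihilated X N x -> dual_eq nabs X (iter N (act_m1 nabs z) x) (fun=> 0).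
Proof.
move=> z_unit /(_ (nseq N z)); rewrite foldr_act_m1_nseq size_nseq.
by rewrite all_nseq z_unit orbT; apply.
Qed.

Lemma annihilated_O1 N x : annihilated O1bar N x -> annihilated O1 N x.
Proof. by move=> x_N gs size_gs gs_unit; apply/dual_eq_O1/x_N. Qed.

Lemma inv_trivE (X : M2 F -> Prop) x : inv_triv nabs X x <->
  is_dual nabs X x /\ exists2 N, N == 1%N & annihilated X N x.
Proof.
split=> [[x_lin x_inv]|[x_lin [_ /eqP-> x_1]]]; split=> //.
  exists 1%N => // [[|g [|//]]] //= _ /andP[g_unit _] f Sf.
  by rewrite /act_m1 x_inv // subrr.
move=> g g_unit f Sf; have := x_1 [:: g] erefl; rewrite /= g_unit.
by move=> /(_ isT f Sf) /eqP; rewrite subr_eq0 => /eqP.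
Qed.

Lemma gen_inv_trivE (X : M2 F -> Prop) x : gen_inv_triv nabs X x <->
  is_dual nabs X x /\ exists2 N, (0 < N)%N & annihilated X N x.
Proof.
split=> [[x_lin [k x_k]]|[x_lin [[|k] // _ x_k]]]; split=> //.
  by exists k.+1.
by exists k.
Qed.

Section Central.
Variable z : M2 F.
Hypotheses (z_unit : z \in unitmx) (z_central : forall A : M2 F, A *m z = z *m A)
  (twist_z : twist z != 1).

Section Splitting.
Variable h0 : M2 F -> CC.
Hypotheses (S_h0 : is_S nabs O1bar h0)
  (split_h0 : forall u, is_S nabs O1bar u -> is_S nabs O1 (fun M => u M - u 0 * h0 M)).

Lemma dual_eq_delta x : is_dual nabs O1bar x -> dual_eq nabs O1 x (fun=> 0) ->
  dual_eq nabs O1bar x (fun u => u 0 * x h0).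
Proof.
move=> x_lin x_O1 u Su.
have {1}-> : u = (fun M => u 0 * h0 M + (u M - u 0 * h0 M)).
  by apply: functional_extensionality => M; rewrite addrC subrK.
rewrite x_lin // ?(x_O1 _ (split_h0 Su)) ?addr0 //.
exact/is_S_O1_O1bar/split_h0.
Qed.

Definition lift_dual (eta : (M2 F -> CC) -> CC) : (M2 F -> CC) -> CC :=
  fun u => eta (fun M => u M - u 0 * h0 M).

Lemma lift_dual_dual eta : is_dual nabs O1 eta -> is_dual nabs O1bar (lift_dual eta).
Proof.
move=> eta_lin a f g Sf Sg; rewrite /lift_dual -eta_lin; try exact: split_h0.
by congr eta; apply: functional_extensionality => M; ring.
Qed.

Lemma lift_dual_O1 eta : dual_eq nabs O1 (lift_dual eta) eta.
Proof.
move=> u [u_out _ _]; rewrite /lift_dual u_out; last by move/O1_neq0; rewrite eqxx.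
by congr eta; apply: functional_extensionality => M; rewrite mul0r subr0.
Qed.

Lemma dual_eq0_of_O1 n x : is_dual nabs O1bar x -> dual_eq nabs O1 x (fun=> 0) ->
  dual_eq nabs O1bar (iter n (act_m1 nabs z) x) (fun=> 0) ->
  dual_eq nabs O1bar x (fun=> 0).
Proof.
move=> x_lin x_O1 x_n u Su; have x_delta := dual_eq_delta x_lin x_O1.
have := iter_act_m1_resp unit_stable_O1bar n z_unit x_delta.
rewrite iter_act_m1_delta => xn_delta.
have := x_n u Su; rewrite xn_delta // mulrCA => /eqP.
rewrite mulf_eq0 expf_eq0 subr_eq0 (negPf twist_z) andbF /= => /eqP <-.
exact: x_delta.
Qed.

Lemma dual_eq_of_O1 n xi eta :
  is_dual nabs O1bar xi -> is_dual nabs O1bar eta -> dual_eq nabs O1 xi eta ->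
  dual_eq nabs O1bar (iter n (act_m1 nabs z) xi) (fun=> 0) ->
  dual_eq nabs O1bar (iter n (act_m1 nabs z) eta) (fun=> 0) ->
  dual_eq nabs O1bar xi eta.
Proof.
move=> xi_lin eta_lin xi_eta xi_n eta_n u Su.
have diff0 : dual_eq nabs O1bar (fun f => xi f - 1 * eta f) (fun=> 0).
  apply: (@dual_eq0_of_O1 n) => [|f Sf|].
  - exact: is_dual_sub.
  - by rewrite xi_eta // mul1r subrr.
  - rewrite -foldr_act_m1_nseq foldr_act_m1_sub !foldr_act_m1_nseq => f Sf.
    by rewrite xi_n // eta_n // mulr0 subr0.
by have /eqP := diff0 u Su; rewrite mul1r subr_eq0 => /eqP.
Qed.

Lemma lift_annihilated N eta : is_dual nabs O1 eta -> annihilated O1 N eta ->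
  exists2 xi, is_dual nabs O1bar xi /\ annihilated O1bar N xi & dual_eq nabs O1 xi eta.
Proof.
move=> eta_lin eta_N; have lift_lin := lift_dual_dual eta_lin.
have twistN_neq0 : (twist z - 1) ^+ N != 0 by rewrite expf_neq0 // subr_eq0.
(* Words of length N send the lift to multiples of the point mass at 0, on which
   (z - 1)^N acts by the unit (twist z - 1)^N: subtracting this correction term
   makes them vanish without changing the restriction to S(O1). *)
pose xi f := lift_dual eta f -
  ((twist z - 1) ^+ N)^-1 * iter N (act_m1 nabs z) (lift_dual eta) f.
exists xi; rewrite /xi; first split.
- exact: is_dual_sub lift_lin (iter_act_m1_dual unit_stable_O1bar N z_unit lift_lin).
- move=> gs size_gs gs_unit u Su; rewrite foldr_act_m1_sub foldr_iter_act_m1 //.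
  set w := foldr (act_m1 nabs) (lift_dual eta) gs.
  have w_lin : is_dual nabs O1bar w :=
    foldr_act_m1_dual unit_stable_O1bar gs_unit lift_lin.
  have w_O1 : dual_eq nabs O1 w (fun=> 0).
    move=> f Sf; rewrite /w.
    by rewrite (foldr_act_m1_resp unit_stable_O1 gs_unit (lift_dual_O1 eta)) ?eta_N.
  have w_delta := dual_eq_delta w_lin w_O1.
  have := iter_act_m1_resp unit_stable_O1bar N z_unit w_delta.
  rewrite iter_act_m1_delta => wN_delta.
  by rewrite wN_delta // w_delta // mulrCA mulKf // subrr.
- move=> u Su; rewrite lift_dual_O1 //.
  rewrite (iter_act_m1_resp unit_stable_O1 N z_unit (lift_dual_O1 eta)) //.
  by rewrite (annihilated_iter z_unit eta_N) // mulr0 subr0.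
Qed.

End Splitting.

Lemma restr_bij_annihilated (P : (M2 F -> Prop) -> ((M2 F -> CC) -> CC) -> Prop)
    (p : pred nat) :
  (forall X x, P X x <-> is_dual nabs X x /\ exists2 N, p N & annihilated X N x) ->
  restr_bij nabs P.
Proof.
move=> PE; have [h0 S_h0 split_h0] := exists_O1bar_splitting.
split; [|split].
- move=> xi eta /PE [xi_lin [N1 _ xi_N1]] /PE [eta_lin [N2 _ eta_N2]] xi_eta.
  have xi_0 := annihilated_iter z_unit xi_N1.
  have eta_0 := annihilated_iter z_unit eta_N2.
  apply: (dual_eq_of_O1 S_h0 split_h0 (n := N2 + N1)) => //.
    exact (iter_act_m1_eq0_addn unit_stable_O1bar N2 z_unit xi_0).
  by rewrite addnC; exact (iter_act_m1_eq0_addn unit_stable_O1bar N1 z_unit eta_0).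
- move=> xi /PE [xi_lin [N pN xi_N]]; apply/PE; split; first exact: is_dual_O1.
  by exists N => //; apply: annihilated_O1.
- move=> eta /PE [eta_lin [N pN eta_N]].
  have [xi [xi_lin xi_N] xi_eta] := lift_annihilated S_h0 split_h0 eta_lin eta_N.
  by exists xi => //; apply/PE; split=> //; exists N.
Qed.

End Central.

End LocalField.

Unset Implicit Arguments.
Theorem lemma2p4 (F : fieldType) (nabs : F -> Rdefinitions.R) :
  is_nalf nabs ->
  restr_bij nabs (inv_triv nabs) /\ restr_bij nabs (gen_inv_triv nabs).
Proof.
case=> _ [nabs0 nabs_gt0] [nabsM nabs_ultra] _ [pi [q [q_gt1 nabs_pi _ _]]].
have nabs_pi_gt0 : 0 < nabs pi by rewrite nabs_pi invr_gt0 ltr0n ltnW.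
have pi_neq0 : pi != 0 by apply: contraTneq nabs_pi_gt0 => ->; rewrite nabs0 ltxx.
have pi_unit : (pi%:M : M2 F) \in unitmx by rewrite unitmxE det_scalar unitfE expf_neq0.
have twist_pi : twist nabs (pi%:M : M2 F) != 1.
  rewrite twist_scalar_mx // (inj_eq (@complexI _)) sqrp_eq1 ?ltW //.
  by rewrite nabs_pi invr_eq1 pnatr_eq1 gtn_eqF.
have restr_bij_pi := restr_bij_annihilated nabs0 nabs_gt0 nabsM nabs_ultra
  pi_unit (scalar_mxC pi) twist_pi.
by split; apply: restr_bij_pi; [exact: inv_trivE | exact: gen_inv_trivE].
Qed.
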